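(* Let $k$ be an algebraically closed field, $A$ a finite dimensional $k$-algebra and $f\colon P_1\to P_0$ a morphism in $\operatorname{proj}A$. Then $\mathcal{W}_f$ is a wide subcategory of $\operatorname{mod}A$ (closed under kernels, cokernels and extensions).
   Context: Let $\nu=D\operatorname{Hom}_A(-,A)$ be the Nakayama functor, $C_f=\operatorname{Cok}f$ and $K_{\nu f}=\operatorname{Ker}(\nu f\colon\nu P_1\to\nu P_0)$. Define $\overline{\mathcal{T}}_f=\{X\in\operatorname{mod}A\mid\operatorname{Hom}_A(X,K_{\nu f})=0\}$, $\overline{\mathcal{F}}_f=\{X\in\operatorname{mod}A\mid\operatorname{Hom}_A(C_f,X)=0\}$ and $\mathcal{W}_f=\overline{\mathcal{T}}_f\cap\overline{\mathcal{F}}_f$. *)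

(* Finite-dimensional modules over a finite-dimensional
   k-algebra A are represented concretely as matrix representations. *)
From HB Require Import structures.
From mathcomp Require Import all_boot all_order all_algebra all_field.
Set Implicit Arguments. Unset Strict Implicit. Unset Printing Implicit Defensive.
Import GRing.Theory.
Local Open Scope ring_scope.

Section ModA.
Variables (k : fieldType) (A : falgType k).

(* A (finite-dimensional, left) A-module of k-dimension n: the action
   a |-> rho a on column vectors k^n; rho is a unital k-algebra morphism. *)
Definition is_lmod (n : nat) (rho : A -> 'M[k]_n) : Prop :=
  [/\ rho 1 = 1%:M,
      forall a b, rho (a * b) = rho a *m rho b
    & forall (c : k) a b, rho (c *: a + b) = c *: rho a + rho b].

Definition is_hom nX nY (rX : A -> 'M[k]_nX) (rY : A -> 'M[k]_nY)
  (M : 'M[k]_(nY, nX)) : Prop := forall a, M *m rX a = rY a *m M.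

(* (K, g) is a kernel of M : X -> Y  (g : K -> X injective, Im g = Ker M) *)
Definition is_kernel nK nX nY (rK : A -> 'M[k]_nK) (rX : A -> 'M[k]_nX)
  (rY : A -> 'M[k]_nY) (g : 'M[k]_(nX, nK)) (M : 'M[k]_(nY, nX)) : Prop :=
  [/\ is_hom rK rX g, M *m g = 0, \rank g = nK & (\rank g + \rank M)%N = nX].

(* (C, h) is a cokernel of M : X -> Y  (h : Y -> C surjective, Ker h = Im M) *)
Definition is_cokernel nX nY nC (rX : A -> 'M[k]_nX) (rY : A -> 'M[k]_nY)
  (rC : A -> 'M[k]_nC) (M : 'M[k]_(nY, nX)) (h : 'M[k]_(nC, nY)) : Prop :=
  [/\ is_hom rY rC h, h *m M = 0, \rank h = nC & (\rank M + \rank h)%N = nY].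

Definition is_ses nX nY nZ (rX : A -> 'M[k]_nX) (rY : A -> 'M[k]_nY)
  (rZ : A -> 'M[k]_nZ) (g : 'M[k]_(nY, nX)) (h : 'M[k]_(nZ, nY)) : Prop :=
  [/\ is_hom rX rY g, is_hom rY rZ h, h *m g = 0,
      \rank g = nX & \rank h = nZ] /\ (nX + nZ)%N = nY.

Definition is_proj nP (rP : A -> 'M[k]_nP) : Prop :=
  is_lmod rP /\
  forall nY nZ (rY : A -> 'M[k]_nY) (rZ : A -> 'M[k]_nZ)
         (h : 'M[k]_(nZ, nY)) (u : 'M[k]_(nZ, nP)),
    is_lmod rY -> is_lmod rZ -> is_hom rY rZ h -> \rank h = nZ ->
    is_hom rP rZ u -> exists v : 'M[k]_(nY, nP), is_hom rP rY v /\ h *m v = u.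

Definition modclass := forall n : nat, (A -> 'M[k]_n) -> Prop.

Definition is_wide (W : modclass) : Prop :=
  [/\ (forall nX nY (rX : A -> 'M[k]_nX) (rY : A -> 'M[k]_nY) (M : 'M[k]_(nY, nX)),
         is_lmod rX -> is_lmod rY -> W nX rX -> W nY rY -> is_hom rX rY M ->
         forall nK (rK : A -> 'M[k]_nK) (g : 'M[k]_(nX, nK)),
           is_lmod rK -> is_kernel rK rX rY g M -> W nK rK),
      (forall nX nY (rX : A -> 'M[k]_nX) (rY : A -> 'M[k]_nY) (M : 'M[k]_(nY, nX)),
         is_lmod rX -> is_lmod rY -> W nX rX -> W nY rY -> is_hom rX rY M ->
         forall nC (rC : A -> 'M[k]_nC) (h : 'M[k]_(nC, nY)),
           is_lmod rC -> is_cokernel rX rY rC M h -> W nC rC)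
    & (forall nX nY nZ (rX : A -> 'M[k]_nX) (rY : A -> 'M[k]_nY)
              (rZ : A -> 'M[k]_nZ) (g : 'M[k]_(nY, nX)) (h : 'M[k]_(nZ, nY)),
         is_lmod rX -> is_lmod rY -> is_lmod rZ -> W nX rX -> W nZ rZ ->
         is_ses rX rY rZ g h -> W nY rY)].

Definition adim := \dim (fullv : {vspace A}).
Definition abasis : adim.-tuple A := vbasis fullv.

Definition Lmx (a : A) : 'M[k]_adim :=
  \matrix_(i, j) coord abasis i (a * tnth abasis j).
Definition Rmx (a : A) : 'M[k]_adim :=
  \matrix_(i, j) coord abasis i (tnth abasis j * a).

(* Hom_A(P, A) as a subspace of 'rV_(adim * n) (via mxvec) *)
Definition homA_space n (rP : A -> 'M[k]_n) : 'M[k]_(adim * n) :=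
  (\bigcap_(i < adim)
     kermx (lin_mx (fun phi : 'M[k]_(adim, n) =>
              phi *m rP (tnth abasis i) - Lmx (tnth abasis i) *m phi)))%MS.

Definition nu_dim n (rP : A -> 'M[k]_n) : nat := \rank (homA_space rP).
Definition hbase n (rP : A -> 'M[k]_n) : 'M[k]_(nu_dim rP, adim * n) :=
  row_base (homA_space rP).

(* Hom_A(P,A) is a right A-module ((phi.a)(p) = phi(p) a); in coordinates
   (row vectors w.r.t. hbase) the right action of a is c |-> c *m nu_act a.
   Its k-dual D Hom_A(P,A) is the left module with action nu_act on
   column vectors (dual coordinates). *)
Definition nu_act n (rP : A -> 'M[k]_n) (a : A) : 'M[k]_(nu_dim rP) :=
  lin1_mx (fun c : 'rV[k]_(nu_dim rP) =>
    mxvec (Rmx a *m vec_mx (c *m hbase rP)) *m pinvmx (hbase rP)).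

(* nu f = D Hom_A(f, A) : nu P1 -> nu P0 for f : P1 -> P0. Hom_A(f,A) is
   phi |-> phi o f, i.e. c0 |-> c0 *m nu_mor f; its dual is the same matrix
   acting on column vectors. *)
Definition nu_mor n1 n0 (rP1 : A -> 'M[k]_n1) (rP0 : A -> 'M[k]_n0)
  (f : 'M[k]_(n0, n1)) : 'M[k]_(nu_dim rP0, nu_dim rP1) :=
  lin1_mx (fun c0 : 'rV[k]_(nu_dim rP0) =>
    mxvec (vec_mx (c0 *m hbase rP0) *m f) *m pinvmx (hbase rP1)).

(* \overline{T}_f : Hom_A(X, K_{nu f}) = 0, for (any, equivalently every)
   kernel K_{nu f} of nu f. *)
Definition Tbar n1 n0 (rP1 : A -> 'M[k]_n1) (rP0 : A -> 'M[k]_n0)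
  (f : 'M[k]_(n0, n1)) : modclass := fun nX rX =>
  forall nK (rK : A -> 'M[k]_nK) (iota : 'M[k]_(nu_dim rP1, nK)),
    is_lmod rK -> is_kernel rK (nu_act rP1) (nu_act rP0) iota (nu_mor rP1 rP0 f) ->
    forall M : 'M[k]_(nK, nX), is_hom rX rK M -> M = 0.

(* \overline{F}_f : Hom_A(C_f, X) = 0, C_f a cokernel of f. *)
Definition Fbar n1 n0 (rP1 : A -> 'M[k]_n1) (rP0 : A -> 'M[k]_n0)
  (f : 'M[k]_(n0, n1)) : modclass := fun nX rX =>
  forall nC (rC : A -> 'M[k]_nC) (pi : 'M[k]_(nC, n0)),
    is_lmod rC -> is_cokernel rP1 rP0 rC f pi ->
    forall M : 'M[k]_(nX, nC), is_hom rC rX M -> M = 0.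

Definition Wf n1 n0 (rP1 : A -> 'M[k]_n1) (rP0 : A -> 'M[k]_n0)
  (f : 'M[k]_(n0, n1)) : modclass := fun nX rX =>
  Tbar rP1 rP0 f rX /\ Fbar rP1 rP0 f rX.

End ModA.

From HB Require Import structures.
From mathcomp Require Import all_boot all_order all_algebra all_field.
Set Implicit Arguments. Unset Strict Implicit. Unset Printing Implicit Defensive.
Import GRing.Theory.
Local Open Scope ring_scope.

(* For a module X write Hom_A(f, X) : Hom_A(P0, X) -> Hom_A(P1, X), u |-> u f.
   A map C_f -> X is a map u : P0 -> X with u f = 0, so X lies in \overline F_f
   iff Hom_A(f, X) is injective.  A map X -> K_{nu f} is a map X -> nu P1 killed
   by nu f, and the Nakayama duality Hom_A(X, nu P) = D Hom_A(P, X) for projective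
   P identifies these with the functionals on Hom_A(P1, X) vanishing on the image
   of Hom_A(f, X); so X lies in \overline T_f iff Hom_A(f, X) is surjective.
   Thus W_f is the class of X for which Hom_A(f, X) is bijective, and its closure
   under kernels, cokernels and extensions is a diagram chase.  Projectivity is
   used only through dual bases (p_i, phi_i), x = \sum_i phi_i(x) p_i, which also
   make the duality explicit. *)

Section MatrixLemmas.
Variable k : fieldType.

Lemma mul_rV_lin1_linear m n (f : 'rV[k]_m -> 'rV[k]_n) :
  (forall a u v, f (a *: u + v) = a *: f u + f v) -> forall u, u *m lin1_mx f = f u.
Proof.
move=> f_lin u.
exact: (mul_rV_lin1 (HB.pack f (GRing.isLinear.Build _ _ _ _ f f_lin))).
Qed.

Lemma mul_vec_lin_linear m1 n1 m2 n2 (f : 'M[k]_(m1, n1) -> 'M[k]_(m2, n2)) :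
  (forall a u v, f (a *: u + v) = a *: f u + f v) ->
  forall u, mxvec u *m lin_mx f = mxvec (f u).
Proof.
move=> f_lin u.
exact: (mul_vec_lin (HB.pack f (GRing.isLinear.Build _ _ _ _ f f_lin))).
Qed.

Lemma scalar_linear_sum_delta m n (g : 'M[k]_(m, n) -> k) :
  (forall a u v, g (a *: u + v) = a * g u + g v) ->
  forall u, g u = \sum_i \sum_j u i j * g (delta_mx i j).
Proof.
move=> g_lin u.
pose G : {linear 'M[k]_(m, n) -> k^o} := HB.pack g (GRing.isLinear.Build _ _ _ _ g g_lin).
rewrite -[g u]/(G u) {1}(matrix_sum_delta u) linear_sum; apply: eq_bigr => i _.
by rewrite linear_sum; apply: eq_bigr => j _; rewrite linearZ.
Qed.

Lemma mulmx_cVP m n (X Y : 'M[k]_(m, n)) : (forall v : 'cV_n, X *m v = Y *m v) -> X = Y.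
Proof. by move=> eqXY; apply/trmx_inj/eqP/mulmxP => u; rewrite -[u]trmxK -!trmx_mul eqXY. Qed.

Lemma mx_bilinear_eq m n (B C : 'M[k]_(m, n)) :
  (forall (c : 'rV_m) (x : 'cV_n), (c *m B *m x) 0 0 = (c *m C *m x) 0 0) -> B = C.
Proof.
move=> eqBC; apply/matrixP => i j.
by have := eqBC (delta_mx 0 i) (delta_mx j 0); rewrite -!rowE -!colE !mxE.
Qed.

Lemma mx_of_bilinear m n (b : 'rV[k]_m -> 'cV[k]_n -> k) :
  (forall x a c c', b (a *: c + c') x = a * b c x + b c' x) ->
  (forall c a x x', b c (a *: x + x') = a * b c x + b c x') ->
  exists B : 'M_(m, n), forall c x, (c *m B *m x) 0 0 = b c x.
Proof.
move=> bl br; exists (\matrix_(i, j) b (delta_mx 0 i) (delta_mx j 0)) => c x.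
rewrite !mxE (scalar_linear_sum_delta (bl x)) big_ord1.
under [RHS]eq_bigr => i _ do rewrite (scalar_linear_sum_delta (br _)) mulr_sumr.
rewrite exchange_big; apply: eq_bigr => j _; rewrite mxE mulr_suml.
apply: eq_bigr => i _; rewrite big_ord1 !mxE (ord1 0).
by rewrite [x j 0 * _]mulrC mulrA.
Qed.

Lemma mulmx_ker_factor nX nY nZ (g : 'M[k]_(nY, nX)) (h : 'M[k]_(nZ, nY)) :
  h *m g = 0 -> (\rank g + \rank h)%N = nY ->
  forall p (M : 'M[k]_(nY, p)), h *m M = 0 -> exists N, M = g *m N.
Proof.
move=> hg rk p M hM.
have M_ker : (M^T <= kermx h^T)%MS by apply/sub_kermxP; rewrite -trmx_mul hM trmx0.
have g_ker : (g^T <= kermx h^T)%MS by apply/sub_kermxP; rewrite -trmx_mul hg trmx0.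
have rk_ker : (nY - \rank h = \rank g)%N.
  by apply/eqP; rewrite -(eqn_add2r (\rank h)) subnK ?rank_leq_col ?rk.
have := (mxrank_leqif_eq g_ker).2.
rewrite mxrank_ker !mxrank_tr rk_ker eqxx => /esym/andP[_ ker_g].
have /submxP[D eD] := submx_trans M_ker ker_g.
by exists D^T; rewrite -[M]trmxK eD trmx_mul trmxK.
Qed.

Lemma mulmx_coker_factor n0 n1 nC (f : 'M[k]_(n0, n1)) (pi : 'M[k]_(nC, n0)) :
  pi *m f = 0 -> (\rank f + \rank pi)%N = n0 ->
  forall p (u : 'M[k]_(p, n0)), u *m f = 0 -> exists v, u = v *m pi.
Proof.
move=> pif rk p u uf.
have [|||N eN] := @mulmx_ker_factor nC n0 n1 pi^T f^T _ _ p u^T.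
- by rewrite -trmx_mul pif trmx0.
- by rewrite !mxrank_tr addnC.
- by rewrite -trmx_mul uf trmx0.
by exists N^T; rewrite -[u]trmxK eN trmx_mul trmxK.
Qed.

Lemma mx_separate m n (S : 'M[k]_(m, n)) (x : 'rV_n) :
  ~~ (x <= S)%MS -> exists2 w : 'cV_n, S *m w = 0 & (x *m w) 0 0 != 0.
Proof.
rewrite submxE => /rV0Pn[j xj].
exists (cokermx S *m delta_mx j 0); first by rewrite mulmxA mulmx_coker mul0mx.
by rewrite mulmxA -colE mxE.
Qed.

End MatrixLemmas.

Section RegularModule.
Variables (k : fieldType) (A : falgType k).
Local Notation d := (adim A).
Local Notation bs := (abasis A).
Implicit Types (a b y : A) (c : k) (v w : 'cV[k]_d).

Definition coordA a : 'cV[k]_d := \col_i coord bs i a.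
Definition elemA v : A := \sum_i v i 0 *: bs`_i.

Lemma coordAK : cancel coordA elemA.
Proof.
move=> a; rewrite /elemA [RHS](coord_vbasis (memvf a)).
by apply: eq_bigr => i _; rewrite mxE.
Qed.

Lemma elemAK : cancel elemA coordA.
Proof.
move=> v; apply/colP => i.
by rewrite mxE coord_sum_free // (basis_free (vbasisP _)).
Qed.

Lemma coordA_linear c a b : coordA (c *: a + b) = c *: coordA a + coordA b.
Proof. by apply/colP => i; rewrite !mxE linearP. Qed.

Lemma Lmx_coordA a y : Lmx a *m coordA y = coordA (a * y).
Proof.
rewrite -{2}(coordAK y) /elemA mulr_sumr.
apply/colP => i; rewrite !mxE linear_sum; apply: eq_bigr => j _.
by rewrite !mxE -scalerAr linearZ (tnth_nth 0) mulrC.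
Qed.

Lemma Rmx_coordA a y : Rmx a *m coordA y = coordA (y * a).
Proof.
rewrite -{2}(coordAK y) /elemA mulr_suml.
apply/colP => i; rewrite !mxE linear_sum; apply: eq_bigr => j _.
by rewrite !mxE -scalerAl linearZ (tnth_nth 0) mulrC.
Qed.

Lemma Lmx_elemA a v : Lmx a *m v = coordA (a * elemA v).
Proof. by rewrite -Lmx_coordA elemAK. Qed.

Lemma Rmx_elemA a v : Rmx a *m v = coordA (elemA v * a).
Proof. by rewrite -Rmx_coordA elemAK. Qed.

Lemma Lmx_lmod : is_lmod (@Lmx k A).
Proof.
split=> [|a b|c a b]; apply: mulmx_cVP => v.
- by rewrite Lmx_elemA mul1r elemAK mul1mx.
- by rewrite -mulmxA !Lmx_elemA coordAK mulrA.
- by rewrite mulmxDl -scalemxAl !Lmx_elemA mulrDl -scalerAl coordA_linear.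
Qed.

Lemma Rmx1 : Rmx (1 : A) = 1%:M.
Proof. by apply: mulmx_cVP => v; rewrite Rmx_elemA mulr1 elemAK mul1mx. Qed.

Lemma RmxM a b : Rmx (a * b) = Rmx b *m Rmx a.
Proof. by apply: mulmx_cVP => v; rewrite -mulmxA !Rmx_elemA coordAK mulrA. Qed.

Lemma Rmx_linear c a b : Rmx (c *: a + b) = c *: Rmx a + Rmx b.
Proof.
apply: mulmx_cVP => v; rewrite mulmxDl -scalemxAl !Rmx_elemA.
by rewrite mulrDr -scalerAr coordA_linear.
Qed.

Lemma Rmx_hom a : is_hom (@Lmx k A) (@Lmx k A) (Rmx a).
Proof.
move=> b; apply: mulmx_cVP => v.
by rewrite -!mulmxA Lmx_elemA Rmx_elemA !Lmx_elemA Rmx_elemA !coordAK mulrA.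
Qed.

End RegularModule.
Arguments Lmx_lmod {k A}.

Section Modules.
Variables (k : fieldType) (A : falgType k).
Local Notation d := (adim A).
Local Notation bs := (abasis A).

Section OneModule.
Variables (n : nat) (r : A -> 'M[k]_n).
Hypothesis r_lmod : is_lmod r.

Lemma lmod1 : r 1 = 1%:M. Proof. by case: r_lmod. Qed.

Lemma lmodM a b : r (a * b) = r a *m r b. Proof. by case: r_lmod. Qed.

Lemma lmod_elemA v : r (elemA v) = \sum_i v i 0 *: r bs`_i.
Proof.
pose R : {linear A -> 'M[k]_n} :=
  HB.pack r (GRing.isLinear.Build _ _ _ _ r (let: And3 _ _ r_lin := r_lmod in r_lin)).
by rewrite -[r _]/(R _) linear_sum; apply: eq_bigr => i _; rewrite linearZ.
Qed.

(* [act x] is the matrix of the A-linear map A -> X, a |-> a x. *)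
Definition act (x : 'cV[k]_n) : 'M[k]_(n, d) := \matrix_(i, j) (r bs`_j *m x) i 0.

Lemma act_elemA x w : act x *m w = r (elemA w) *m x.
Proof.
rewrite lmod_elemA mulmx_suml; apply/colP => i; rewrite !mxE summxE.
apply: eq_bigr => j _; rewrite !mxE mulr_suml; apply: eq_bigr => l _.
by rewrite !mxE mulrAC [w j 0 * _]mulrC.
Qed.

Lemma act_coordA x a : act x *m coordA a = r a *m x.
Proof. by rewrite act_elemA coordAK. Qed.

Lemma act_hom x : is_hom (@Lmx k A) r (act x).
Proof.
move=> a; apply: mulmx_cVP => v.
by rewrite -!mulmxA Lmx_elemA act_coordA !act_elemA lmodM mulmxA.
Qed.

Lemma act_Rmx x a : act x *m Rmx a = act (r a *m x).
Proof.
apply: mulmx_cVP => v.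
by rewrite -mulmxA Rmx_elemA act_coordA !act_elemA lmodM mulmxA.
Qed.

Lemma act_linear c (x z : 'cV[k]_n) : act (c *: x + z) = c *: act x + act z.
Proof.
apply/matrixP => i j; rewrite !mxE mulr_sumr -big_split /=.
by apply: eq_bigr => l _; rewrite !mxE mulrDr mulrCA.
Qed.

End OneModule.

Lemma act_Lmx y : act (@Lmx k A) y = Rmx (elemA y).
Proof. by apply: mulmx_cVP => w; rewrite (act_elemA Lmx_lmod) Lmx_elemA Rmx_elemA. Qed.

Lemma hom_act n1 n2 (r1 : A -> 'M[k]_n1) (r2 : A -> 'M[k]_n2) (M : 'M[k]_(n2, n1)) x :
  is_lmod r1 -> is_lmod r2 -> is_hom r1 r2 M -> M *m act r1 x = act r2 (M *m x).
Proof.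
move=> r1_lmod r2_lmod hM; apply: mulmx_cVP => w.
by rewrite -mulmxA !act_elemA // !mulmxA hM.
Qed.

Section Homs.
Variables (n1 n2 n3 : nat).
Variables (r1 : A -> 'M[k]_n1) (r2 : A -> 'M[k]_n2) (r3 : A -> 'M[k]_n3).

Lemma hom_comp M N : is_hom r1 r2 M -> is_hom r2 r3 N -> is_hom r1 r3 (N *m M).
Proof. by move=> hM hN a; rewrite -mulmxA hM mulmxA hN mulmxA. Qed.

Lemma hom_add M N : is_hom r1 r2 M -> is_hom r1 r2 N -> is_hom r1 r2 (M + N).
Proof. by move=> hM hN a; rewrite mulmxDl mulmxDr hM hN. Qed.

Lemma hom_sub M N : is_hom r1 r2 M -> is_hom r1 r2 N -> is_hom r1 r2 (M - N).
Proof. by move=> hM hN a; rewrite mulmxBl mulmxBr hM hN. Qed.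

Lemma hom_sum I (s : seq I) (P : pred I) (F : I -> 'M[k]_(n2, n1)) :
  (forall i, P i -> is_hom r1 r2 (F i)) -> is_hom r1 r2 (\sum_(i <- s | P i) F i).
Proof.
move=> hF; elim/big_rec: _ => [a|i M Pi hM]; first by rewrite mul0mx mulmx0.
exact: hom_add (hF i Pi) hM.
Qed.

Lemma hom_factor_mono (g : 'M[k]_(n3, n2)) (N : 'M[k]_(n2, n1)) :
  is_hom r2 r3 g -> row_full g -> is_hom r1 r3 (g *m N) -> is_hom r1 r2 N.
Proof.
move=> hg g_full hgN a; apply: (row_full_inj g_full).
by rewrite mulmxA hgN mulmxA -hg -mulmxA.
Qed.

Lemma hom_factor_epi (h : 'M[k]_(n2, n1)) (N : 'M[k]_(n3, n2)) :
  is_hom r1 r2 h -> row_free h -> is_hom r1 r3 (N *m h) -> is_hom r2 r3 N.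
Proof.
move=> hh h_free hNh a; apply: (row_free_inj h_free).
by rewrite -mulmxA -hh mulmxA hNh mulmxA.
Qed.

End Homs.
End Modules.

Section KernelCokernel.
Variables (k : fieldType) (A : falgType k).

Lemma restrict_lmod n m (r : A -> 'M[k]_n) (g : 'M[k]_(n, m)) (g' : 'M[k]_(m, n)) :
  is_lmod r -> g' *m g = 1%:M -> (forall a, exists Z, r a *m g = g *m Z) ->
  is_lmod (fun a => g' *m r a *m g) /\ is_hom (fun a => g' *m r a *m g) r g.
Proof.
move=> r_lmod g'K g_stable.
have gK a : g *m (g' *m r a *m g) = r a *m g.
  by rewrite -mulmxA; have [Z ->] := g_stable a; rewrite (mulmxA g') g'K mul1mx.
split=> [|a]; last by rewrite gK.
split=> [|a b|c a b]; first by rewrite lmod1 // mulmx1 g'K.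
  by rewrite lmodM // -!mulmxA (mulmxA g' (r b)) gK.
by case: r_lmod => _ _ ->; rewrite mulmxDr mulmxDl -scalemxAr -scalemxAl.
Qed.

Lemma quotient_lmod n m (r : A -> 'M[k]_n) (pi : 'M[k]_(m, n)) (pi' : 'M[k]_(n, m)) :
  is_lmod r -> pi *m pi' = 1%:M -> (forall a, exists Z, pi *m r a = Z *m pi) ->
  is_lmod (fun a => pi *m r a *m pi') /\ is_hom r (fun a => pi *m r a *m pi') pi.
Proof.
move=> r_lmod pi'K pi_stable.
have piK a : pi *m r a *m pi' *m pi = pi *m r a.
  by have [Z ->] := pi_stable a; rewrite -!mulmxA (mulmxA pi) pi'K mul1mx.
split=> [|a]; last by rewrite piK.
split=> [|a b|c a b]; first by rewrite lmod1 // mulmx1 pi'K.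
  by rewrite lmodM // !mulmxA piK.
by case: r_lmod => _ _ ->; rewrite mulmxDr mulmxDl -scalemxAr -scalemxAl.
Qed.

Variables (nX nY : nat) (rX : A -> 'M[k]_nX) (rY : A -> 'M[k]_nY) (M : 'M[k]_(nY, nX)).
Hypotheses (rX_lmod : is_lmod rX) (hM : is_hom rX rY M).

Lemma kernel_exists : exists nK (rK : A -> 'M[k]_nK) (g : 'M[k]_(nX, nK)),
  is_lmod rK /\ is_kernel rK rX rY g M.
Proof.
pose g := (row_base (kermx M^T))^T.
have Mg : M *m g = 0.
  by apply: trmx_inj; rewrite trmx_mul trmxK trmx0; apply/sub_kermxP; rewrite eq_row_base.
have rk_g : \rank g = \rank (kermx M^T) by rewrite mxrank_tr eq_row_base.
have rk : (\rank g + \rank M)%N = nX by rewrite rk_g mxrank_ker mxrank_tr subnK ?rank_leq_col.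
have [g' g'K] : exists g', g' *m g = 1%:M by apply/row_fullP; rewrite /row_full rk_g.
have g_stable a : exists Z, rX a *m g = g *m Z.
  by apply: (mulmx_ker_factor Mg rk); rewrite mulmxA hM -mulmxA Mg mulmx0.
have [rK_lmod hg] := restrict_lmod rX_lmod g'K g_stable.
by exists _, (fun a => g' *m rX a *m g), g.
Qed.

Hypothesis rY_lmod : is_lmod rY.

Lemma cokernel_exists : exists nC (rC : A -> 'M[k]_nC) (pi : 'M[k]_(nC, nY)),
  is_lmod rC /\ is_cokernel rX rY rC M pi.
Proof.
pose pi := row_base (kermx M).
have piM : pi *m M = 0 by apply/sub_kermxP; rewrite eq_row_base.
have rk_pi : \rank pi = \rank (kermx M) by rewrite eq_row_base.
have rk : (\rank M + \rank pi)%N = nY by rewrite rk_pi mxrank_ker subnKC ?rank_leq_row.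
have [pi' pi'K] : exists pi', pi *m pi' = 1%:M by apply/row_freeP; rewrite /row_free rk_pi.
have pi_stable a : exists Z, pi *m rY a = Z *m pi.
  apply/submxP; rewrite eq_row_base; apply/sub_kermxP.
  by rewrite -mulmxA -hM mulmxA piM mul0mx.
have [rC_lmod hpi] := quotient_lmod rY_lmod pi'K pi_stable.
by exists _, (fun a => pi *m rY a *m pi'), pi.
Qed.

End KernelCokernel.

Section HomSpace.
Variables (k : fieldType) (A : falgType k).
Local Notation bs := (abasis A).

Definition hom_space n n' (r : A -> 'M[k]_n) (r' : A -> 'M[k]_n') : 'M[k]_(n' * n) :=
  (\bigcap_(i < adim A) kermx (lin_mx (fun u : 'M[k]_(n', n) =>
     u *m r (tnth bs i) - r' (tnth bs i) *m u)))%MS.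

Lemma hom_spaceP n n' (r : A -> 'M[k]_n) (r' : A -> 'M[k]_n') u :
  is_lmod r -> is_lmod r' -> (mxvec u <= hom_space r r')%MS <-> is_hom r r' u.
Proof.
move=> r_lmod r'_lmod.
pose D i (u : 'M[k]_(n', n)) := u *m r (tnth bs i) - r' (tnth bs i) *m u.
have D_lin i c u1 u2 : D i (c *: u1 + u2) = c *: D i u1 + D i u2.
  by rewrite /D mulmxDl mulmxDr -scalemxAl -scalemxAr scalerBr opprD addrACA.
split=> [/sub_bigcapmxP u_ker a | hu].
  have hu_bs (i : 'I_(adim A)) : u *m r bs`_i = r' bs`_i *m u.
    have /sub_kermxP := u_ker i isT; rewrite (mul_vec_lin_linear (D_lin i)).
    by move/eqP; rewrite mxvec_eq0 subr_eq0 -!tnth_nth => /eqP.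
  rewrite -(coordAK a) !lmod_elemA // mulmx_sumr mulmx_suml.
  by apply: eq_bigr => i _; rewrite -scalemxAr -scalemxAl hu_bs.
apply/sub_bigcapmxP => i _; apply/sub_kermxP.
by rewrite (mul_vec_lin_linear (D_lin i)) /D hu subrr linear0.
Qed.

End HomSpace.

Definition homA (k : fieldType) (A : falgType k) n (r : A -> 'M[k]_n)
  (c : 'rV[k]_(nu_dim r)) : 'M[k]_(adim A, n) := vec_mx (c *m hbase r).
Arguments homA {k A n} r c.

Definition homA_coord (k : fieldType) (A : falgType k) n (r : A -> 'M[k]_n)
  (phi : 'M[k]_(adim A, n)) : 'rV[k]_(nu_dim r) := mxvec phi *m pinvmx (hbase r).
Arguments homA_coord {k A n} r phi.

Section NakayamaFunctor.
Variables (k : fieldType) (A : falgType k).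
Local Notation d := (adim A).

Section Object.
Variables (n : nat) (r : A -> 'M[k]_n).
Hypothesis r_lmod : is_lmod r.
Local Notation N := (nu_dim r).

Lemma homA_hom c : is_hom r (@Lmx k A) (homA r c).
Proof.
apply/(hom_spaceP _ r_lmod Lmx_lmod).
by rewrite vec_mxK -(eq_row_base (homA_space r)) submxMl.
Qed.

Lemma homA_coordK c : homA_coord r (homA r c) = c.
Proof. by rewrite /homA_coord /homA vec_mxK mulmxKp ?row_base_free. Qed.

Lemma homAK phi : is_hom r (@Lmx k A) phi -> homA r (homA_coord r phi) = phi.
Proof.
move/(hom_spaceP _ r_lmod Lmx_lmod) => phi_in.
by rewrite /homA /homA_coord mulmxKpV ?mxvecK ?eq_row_base.
Qed.

Lemma homA_coord_linear c phi psi :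
  homA_coord r (c *: phi + psi) = c *: homA_coord r phi + homA_coord r psi.
Proof. by rewrite /homA_coord linearP /= mulmxDl -scalemxAl. Qed.

Lemma homA_linear c (u w : 'rV[k]_N) : homA r (c *: u + w) = c *: homA r u + homA r w.
Proof. by rewrite /homA mulmxDl -scalemxAl linearP. Qed.

Lemma homA_coord_sum I (s : seq I) (P : pred I) (F : I -> 'M[k]_(d, n)) :
  homA_coord r (\sum_(i <- s | P i) F i) = \sum_(i <- s | P i) homA_coord r (F i).
Proof. by rewrite /homA_coord linear_sum mulmx_suml. Qed.

Lemma nu_actE c a : c *m nu_act r a = homA_coord r (Rmx a *m homA r c).
Proof.
apply: mul_rV_lin1_linear => s u w.
by rewrite /= mulmxDl -scalemxAl linearP /= mulmxDr -scalemxAr linearP /= mulmxDl -scalemxAl.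
Qed.

Lemma nu_act_lmod : is_lmod (nu_act r).
Proof.
split=> [|a b|c a b]; apply/eqP/mulmxP => u.
- by rewrite nu_actE Rmx1 mul1mx mulmx1 homA_coordK.
- rewrite mulmxA !nu_actE homAK ?RmxM ?mulmxA //.
  exact: hom_comp (homA_hom u) (Rmx_hom a).
- by rewrite mulmxDr -scalemxAr !nu_actE Rmx_linear mulmxDl -scalemxAl homA_coord_linear.
Qed.

End Object.

Variables (n1 n0 : nat) (r1 : A -> 'M[k]_n1) (r0 : A -> 'M[k]_n0) (f : 'M[k]_(n0, n1)).
Hypotheses (r1_lmod : is_lmod r1) (r0_lmod : is_lmod r0) (hf : is_hom r1 r0 f).

Lemma nu_morE c : c *m nu_mor r1 r0 f = homA_coord r1 (homA r0 c *m f).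
Proof.
apply: mul_rV_lin1_linear => s u w.
by rewrite /= mulmxDl -scalemxAl linearP /= mulmxDl -scalemxAl linearP /= mulmxDl -scalemxAl.
Qed.

Lemma nu_mor_hom : is_hom (nu_act r1) (nu_act r0) (nu_mor r1 r0 f).
Proof.
move=> a; apply/eqP/mulmxP => c.
rewrite !mulmxA nu_morE nu_actE // homAK //; last exact: hom_comp hf (homA_hom r0_lmod c).
rewrite nu_actE // nu_morE homAK ?mulmxA //.
exact: hom_comp (homA_hom r0_lmod c) (Rmx_hom a).
Qed.

End NakayamaFunctor.

Lemma mxdiag_mul (R : pzSemiRingType) p (p_ : 'I_p -> nat) (B C : forall i, 'M[R]_(p_ i)) :
  \mxdiag_i B i *m \mxdiag_i C i = \mxdiag_i (B i *m C i).
Proof.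
have E D : \mxdiag_i D i = \mxcol_i (D i *m submxcol (1%:M : 'M[R]_(\sum_i p_ i)) i).
  by rewrite -mul_mxdiag_mxcol submxcolK mulmx1.
rewrite (E C) mul_mxdiag_mxcol (E (fun i => B i *m C i)).
by apply/eq_mxcol => i; rewrite mulmxA.
Qed.

Section DualBasis.
Variables (k : fieldType) (A : falgType k).
Local Notation d := (adim A).

Lemma mxdiag_lmod p (p_ : 'I_p -> nat) (r_ : forall j, A -> 'M[k]_(p_ j)) :
  (forall j, is_lmod (r_ j)) -> is_lmod (fun a => \mxdiag_j r_ j a).
Proof.
move=> r_lmod; split=> [|a b|c a b].
- by rewrite -mxdiagZ; apply/eq_mxdiag => j; rewrite lmod1.
- by rewrite mxdiag_mul; apply/eq_mxdiag => j; rewrite lmodM.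
rewrite -mul_scalar_mx -mxdiagZ mxdiag_mul -mxdiagD.
by apply/eq_mxdiag => j; case: (r_lmod j) => _ _ ->; rewrite mul_scalar_mx.
Qed.

(* (p_i, phi_i) is a dual basis of P: phi_i in Hom_A(P, A) and x = \sum_i phi_i(x) p_i. *)
Definition dual_basis n (r : A -> 'M[k]_n) : Prop :=
  exists m (phi : 'I_m -> 'M[k]_(d, n)) (p : 'I_m -> 'cV[k]_n),
    (forall i, is_hom r (@Lmx k A) (phi i)) /\ \sum_i act r (p i) *m phi i = 1%:M.

(* P is a quotient of the free module A^n through the images of the unit vectors;
   splitting this epimorphism gives the dual basis. *)
Lemma proj_dual_basis n (r : A -> 'M[k]_n) : is_proj r -> dual_basis r.
Proof.
case=> r_lmod r_proj.
pose rF (a : A) : 'M[k]_(\sum_(j < n) d) := \mxdiag_(j < n) Lmx a.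
pose E : 'M[k]_(n, \sum_(j < n) d) := \mxrow_(j < n) act r (delta_mx j 0).
have rF_lmod : is_lmod rF by apply: mxdiag_lmod => j; apply: Lmx_lmod.
have hE : is_hom rF r E.
  move=> a; rewrite mul_mxrow_mxdiag mul_mxrow; apply/eq_mxrow => j.
  exact: act_hom.
have E_free : row_free E.
  apply/row_freeP; exists (\mxcol_(j < n) (coordA 1 *m delta_mx 0 j)).
  rewrite mul_mxrow_mxcol mx1_sum_delta; apply: eq_bigr => j _.
  by rewrite mulmxA act_coordA // lmod1 // mul1mx mul_delta_mx.
have h1 : is_hom r r 1%:M by move=> a; rewrite mul1mx mulmx1.
have [v [hv Ev]] := r_proj _ _ rF r E 1%:M rF_lmod r_lmod hE (eqP E_free) h1.
exists n, (fun j => submxcol v j), (fun j => delta_mx j 0); split.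
  move=> j a; rewrite submxcol_mul hv.
  by rewrite -[v in _ *m v]submxcolK mul_mxdiag_mxcol mxcolK.
by rewrite -mul_mxrow_mxcol submxcolK.
Qed.

Lemma dual_basis_expand n (r : A -> 'M[k]_n) m (phi : 'I_m -> 'M[k]_(d, n)) p :
  is_lmod r -> \sum_i act r (p i) *m phi i = 1%:M ->
  forall nX (rX : A -> 'M[k]_nX) u, is_lmod rX -> is_hom r rX u ->
  u = \sum_i act rX (u *m p i) *m phi i.
Proof.
move=> r_lmod phi_p nX rX u rX_lmod hu.
rewrite -{1}[u]mulmx1 -phi_p mulmx_sumr; apply: eq_bigr => i _.
by rewrite mulmxA (hom_act _ r_lmod rX_lmod hu).
Qed.

Section Lifting.
Variables (n : nat) (r : A -> 'M[k]_n) (nX nY : nat).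
Variables (rX : A -> 'M[k]_nX) (rY : A -> 'M[k]_nY) (M : 'M[k]_(nY, nX)).
Hypotheses (r_lmod : is_lmod r) (r_dual : dual_basis r).
Hypotheses (rX_lmod : is_lmod rX) (rY_lmod : is_lmod rY) (hM : is_hom rX rY M).

(* N need only be k-linear; the dual basis turns it into an A-linear lift. *)
Lemma dual_basis_lift v N :
  is_hom r rY v -> v = M *m N -> exists2 w, is_hom r rX w & M *m w = v.
Proof.
case: r_dual => m [phi [p [phi_hom phi_p]]] hv vMN.
exists (\sum_i act rX (N *m p i) *m phi i).
  by apply: hom_sum => i _; apply: hom_comp (phi_hom i) (act_hom rX_lmod _).
rewrite [RHS](dual_basis_expand r_lmod phi_p rY_lmod hv) mulmx_sumr.
by apply: eq_bigr => i _; rewrite mulmxA (hom_act _ rX_lmod rY_lmod hM) vMN mulmxA.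
Qed.

Lemma dual_basis_lift_epi v :
  row_free M -> is_hom r rY v -> exists2 w, is_hom r rX w & M *m w = v.
Proof.
case/row_freeP=> M' MM' hv; apply: (dual_basis_lift hv (N := M' *m v)).
by rewrite mulmxA MM' mul1mx.
Qed.

End Lifting.
End DualBasis.

Section NakayamaPairing.
Variables (k : fieldType) (A : falgType k).
Variables (n : nat) (r : A -> 'M[k]_n).
Variables (m : nat) (phi : 'I_m -> 'M[k]_(adim A, n)) (p : 'I_m -> 'cV[k]_n).
Hypotheses (r_lmod : is_lmod r) (phi_hom : forall i, is_hom r (@Lmx k A) (phi i)).
Hypothesis phi_p : \sum_i act r (p i) *m phi i = 1%:M.
Variables (nX : nat) (rX : A -> 'M[k]_nX).
Hypothesis rX_lmod : is_lmod rX.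

(* The pairing of Hom_A(X, nu P) with Hom_A(P, X) that realizes the duality
   Hom_A(X, nu P) = D Hom_A(P, X), written with the dual basis of P. *)
Definition nakayama_pairing (be : 'M[k]_(nu_dim r, nX)) (v : 'M[k]_(nX, n)) : 'M[k]_1 :=
  \sum_i homA_coord r (phi i) *m be *m (v *m p i).

Lemma nakayama_pairing_sum be I (s : seq I) (P : pred I) (F : I -> 'M[k]_(nX, n)) :
  nakayama_pairing be (\sum_(j <- s | P j) F j) =
  \sum_(j <- s | P j) nakayama_pairing be (F j).
Proof.
rewrite /nakayama_pairing exchange_big; apply: eq_bigr => i _.
by rewrite mulmx_suml mulmx_sumr.
Qed.

Section Balance.
Variable be : 'M[k]_(nu_dim r, nX).
Hypothesis hbe : is_hom rX (nu_act r) be.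

Lemma homA_coord_act_balance y psi x : is_hom r (@Lmx k A) psi ->
  homA_coord r (act (@Lmx k A) y *m psi) *m be *m x =
  homA_coord r psi *m be *m (act rX x *m y).
Proof.
move=> hpsi; rewrite act_Lmx -{1}(homAK r_lmod hpsi) -nu_actE.
by rewrite -(mulmxA _ (nu_act r _)) -hbe (act_elemA rX_lmod) !mulmxA.
Qed.

Lemma nakayama_pairing_act x psi : is_hom r (@Lmx k A) psi ->
  nakayama_pairing be (act rX x *m psi) = homA_coord r psi *m be *m x.
Proof.
move=> hpsi; rewrite {2}(dual_basis_expand r_lmod phi_p Lmx_lmod hpsi).
rewrite homA_coord_sum !mulmx_suml; apply: eq_bigr => i _.
by rewrite homA_coord_act_balance // !mulmxA.
Qed.

Lemma nakayama_pairing_eq0 :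
  (forall v, is_hom r rX v -> (nakayama_pairing be v) 0 0 = 0) -> be = 0.
Proof.
move=> be_v; apply: mx_bilinear_eq => c x; rewrite mulmx0 mul0mx [RHS]mxE.
rewrite -(homA_coordK c) -nakayama_pairing_act; last exact: homA_hom.
apply: be_v; exact: hom_comp (homA_hom r_lmod c) (act_hom rX_lmod x).
Qed.

End Balance.

Lemma nakayama_pairing_onto (w : 'cV[k]_(nX * n)) :
  exists2 be : 'M[k]_(nu_dim r, nX), is_hom rX (nu_act r) be &
    forall v, is_hom r rX v -> (nakayama_pairing be v) 0 0 = (mxvec v *m w) 0 0.
Proof.
pose lam (u : 'M[k]_(nX, n)) := (mxvec u *m w) 0 0.
have lam_lin c u u' : lam (c *: u + u') = c * lam u + lam u'.
  by rewrite /lam linearP /= mulmxDl -scalemxAl !mxE.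
have [be beE] : exists be : 'M_(nu_dim r, nX),
    forall c x, (c *m be *m x) 0 0 = lam (act rX x *m homA r c).
  apply: mx_of_bilinear => [x c u u' | u c x x'].
    by rewrite homA_linear mulmxDr -scalemxAr lam_lin.
  by rewrite act_linear // mulmxDl -scalemxAl lam_lin.
exists be => [a | v hv].
  apply: mx_bilinear_eq => c x.
  rewrite !mulmxA -(mulmxA _ (rX a) x) beE nu_actE beE homAK ?mulmxA ?act_Rmx //.
  exact: hom_comp (homA_hom r_lmod c) (Rmx_hom a).
rewrite [RHS](_ : _ = lam (\sum_i act rX (v *m p i) *m phi i)).
  rewrite /lam linear_sum mulmx_suml summxE /nakayama_pairing summxE.
  by apply: eq_bigr => i _; rewrite beE homAK.
by rewrite -(dual_basis_expand r_lmod phi_p rX_lmod hv).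
Qed.

End NakayamaPairing.

Section Precomposition.
Variables (k : fieldType) (A : falgType k).
Variables (n1 n0 : nat) (r1 : A -> 'M[k]_n1) (r0 : A -> 'M[k]_n0) (f : 'M[k]_(n0, n1)).

Definition precomp_surj nX (rX : A -> 'M[k]_nX) : Prop :=
  forall v, is_hom r1 rX v -> exists2 u, is_hom r0 rX u & u *m f = v.

Definition precomp_inj nX (rX : A -> 'M[k]_nX) : Prop :=
  forall u, is_hom r0 rX u -> u *m f = 0 -> u = 0.

Definition precomp_bij : modclass A := fun nX rX => precomp_surj rX /\ precomp_inj rX.

Definition nu_postcomp_inj nX (rX : A -> 'M[k]_nX) : Prop :=
  forall be : 'M[k]_(nu_dim r1, nX),
    is_hom rX (nu_act r1) be -> nu_mor r1 r0 f *m be = 0 -> be = 0.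

Hypotheses (r1_lmod : is_lmod r1) (r0_lmod : is_lmod r0) (hf : is_hom r1 r0 f).
Variables (nX : nat) (rX : A -> 'M[k]_nX).
Hypothesis rX_lmod : is_lmod rX.

Lemma Fbar_precomp_inj : Fbar r1 r0 f rX <-> precomp_inj rX.
Proof.
split=> [Fbar_X u hu uf | inj_X nC rC pi _ [hpi pif rk_pi _] N hN].
  have [nC [rC [pi [rC_lmod coker_pi]]]] := cokernel_exists hf r0_lmod.
  have [hpi pif rk_pi rk] := coker_pi.
  have [N uN] := mulmx_coker_factor pif rk uf.
  have hN : is_hom rC rX N.
    by apply: (hom_factor_epi hpi); rewrite -?uN // /row_free rk_pi.
  by rewrite uN (Fbar_X _ _ _ rC_lmod coker_pi N hN) mul0mx.
have pi_free : row_free pi by rewrite /row_free rk_pi.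
apply: (row_free_inj pi_free); rewrite mul0mx.
by apply: inj_X; [exact: hom_comp hpi hN | rewrite -mulmxA pif mulmx0].
Qed.

Lemma Tbar_nu_postcomp_inj : Tbar r1 r0 f rX <-> nu_postcomp_inj rX.
Proof.
split=> [Tbar_X be hbe nube | inj_X nK rK iota _ [hiota nuiota rk_iota _] N hN].
  have [nK [rK [iota [rK_lmod ker_iota]]]] :=
    kernel_exists (nu_act_lmod r1_lmod) (nu_mor_hom r1_lmod r0_lmod hf).
  have [hiota nuiota rk_iota rk] := ker_iota.
  have [N beN] := mulmx_ker_factor nuiota rk nube.
  have hN : is_hom rX rK N.
    by apply: (hom_factor_mono hiota); rewrite -?beN // /row_full rk_iota.
  by rewrite beN (Tbar_X _ _ _ rK_lmod ker_iota N hN) mulmx0.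
have iota_full : row_full iota by rewrite /row_full rk_iota.
apply: (row_full_inj iota_full); rewrite mulmx0.
by apply: inj_X; [exact: hom_comp hN hiota | rewrite mulmxA nuiota mul0mx].
Qed.

Section Duality.
Variables (m1 : nat) (phi1 : 'I_m1 -> 'M[k]_(adim A, n1)) (p1 : 'I_m1 -> 'cV[k]_n1).
Variables (m0 : nat) (phi0 : 'I_m0 -> 'M[k]_(adim A, n0)) (p0 : 'I_m0 -> 'cV[k]_n0).
Hypotheses (phi1_hom : forall i, is_hom r1 (@Lmx k A) (phi1 i)).
Hypothesis phi1_p : \sum_i act r1 (p1 i) *m phi1 i = 1%:M.
Hypotheses (phi0_hom : forall i, is_hom r0 (@Lmx k A) (phi0 i)).
Hypothesis phi0_p : \sum_i act r0 (p0 i) *m phi0 i = 1%:M.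

Lemma nakayama_pairing_precomp be u :
  is_hom rX (nu_act r1) be -> is_hom r0 rX u ->
  nakayama_pairing phi1 p1 be (u *m f) = nakayama_pairing phi0 p0 (nu_mor r1 r0 f *m be) u.
Proof.
move=> hbe hu.
rewrite {1}(dual_basis_expand r0_lmod phi0_p rX_lmod hu) mulmx_suml nakayama_pairing_sum.
apply: eq_bigr => j _.
rewrite -mulmxA (nakayama_pairing_act r1_lmod phi1_hom phi1_p rX_lmod hbe);
  last exact: hom_comp hf (phi0_hom j).
by rewrite -{1}(homAK r0_lmod (phi0_hom j)) -nu_morE !mulmxA.
Qed.

Lemma precomp_surj_nu_postcomp_inj : precomp_surj rX -> nu_postcomp_inj rX.
Proof.
move=> surj_X be hbe nube.
apply: (nakayama_pairing_eq0 r1_lmod phi1_hom phi1_p rX_lmod hbe) => v hv.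
have [u hu <-] := surj_X v hv.
rewrite nakayama_pairing_precomp // nube /nakayama_pairing big1 ?mxE // => j _.
by rewrite mulmx0 mul0mx.
Qed.

(* If v is not of the form u f, a functional on Hom_A(P1, X) vanishing on all u f
   but not on v is, under the duality, a nonzero map X -> nu P1 killed by nu f. *)
Lemma nu_postcomp_inj_precomp_surj : nu_postcomp_inj rX -> precomp_surj rX.
Proof.
move=> inj_X v hv.
pose S := hom_space r0 rX *m lin_mx (mulmxr f).
have S_precomp u : is_hom r0 rX u -> (mxvec (u *m f) <= S)%MS.
  by move=> hu; rewrite -[u *m f]/(mulmxr f u) -mul_vec_lin submxMr //; apply/hom_spaceP.
have [/submxP[D vD] | v_notin] := boolP (mxvec v <= S)%MS.
  exists (vec_mx (D *m hom_space r0 rX)).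
    by apply/hom_spaceP; rewrite // vec_mxK submxMl.
  by apply: (can_inj mxvecK); rewrite -[_ *m f]/(mulmxr f _) -mul_vec_lin vec_mxK vD mulmxA.
have [w Sw vw] := mx_separate v_notin.
have [be hbe beE] := nakayama_pairing_onto r1_lmod phi1_hom phi1_p rX_lmod w.
have be0 : be = 0.
  apply: (inj_X _ hbe).
  have hnube := hom_comp hbe (nu_mor_hom r1_lmod r0_lmod hf).
  apply: (nakayama_pairing_eq0 r0_lmod phi0_hom phi0_p rX_lmod hnube) => u hu.
  rewrite -nakayama_pairing_precomp // beE; last exact: hom_comp hf hu.
  by have /submxP[D ->] := S_precomp u hu; rewrite -mulmxA Sw mulmx0 mxE.
move: vw; rewrite -beE // be0 /nakayama_pairing big1 ?mxE ?eqxx // => i _.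
by rewrite mulmx0 mul0mx.
Qed.

Lemma nu_postcomp_inj_iff : nu_postcomp_inj rX <-> precomp_surj rX.
Proof.
by split; [exact: nu_postcomp_inj_precomp_surj | exact: precomp_surj_nu_postcomp_inj].
Qed.

End Duality.
End Precomposition.

Lemma Wf_precomp_bij (k : fieldType) (A : falgType k) n1 n0
    (r1 : A -> 'M[k]_n1) (r0 : A -> 'M[k]_n0) (f : 'M[k]_(n0, n1)) :
  is_lmod r1 -> is_lmod r0 -> is_hom r1 r0 f -> dual_basis r1 -> dual_basis r0 ->
  forall nX (rX : A -> 'M[k]_nX), is_lmod rX -> Wf r1 r0 f rX <-> precomp_bij r1 r0 f rX.
Proof.
move=> r1_lmod r0_lmod hf [m1 [phi1 [p1 [phi1_hom phi1_p]]]] [m0 [phi0 [p0 [phi0_hom phi0_p]]]].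
move=> nX rX rX_lmod.
have T_iff := Tbar_nu_postcomp_inj r1_lmod r0_lmod hf rX.
have F_iff := Fbar_precomp_inj r0_lmod hf rX.
have nu_iff :=
  nu_postcomp_inj_iff r1_lmod r0_lmod hf rX_lmod phi1_hom phi1_p phi0_hom phi0_p.
split=> -[X1 X2]; split; by [apply/nu_iff/T_iff | apply/F_iff | apply/T_iff/nu_iff].
Qed.

Section Closure.
Variables (k : fieldType) (A : falgType k).
Variables (n1 n0 : nat) (r1 : A -> 'M[k]_n1) (r0 : A -> 'M[k]_n0) (f : 'M[k]_(n0, n1)).
Hypotheses (r1_lmod : is_lmod r1) (r0_lmod : is_lmod r0) (hf : is_hom r1 r0 f).
Hypotheses (r1_dual : dual_basis r1) (r0_dual : dual_basis r0).

Section Kernel.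
Variables (nX nY nK : nat) (rX : A -> 'M[k]_nX) (rY : A -> 'M[k]_nY) (rK : A -> 'M[k]_nK).
Variables (M : 'M[k]_(nY, nX)) (g : 'M[k]_(nX, nK)).
Hypotheses (hM : is_hom rX rY M) (ker_g : is_kernel rK rX rY g M).

Lemma kernel_precomp_surj :
  precomp_surj r1 r0 f rX -> precomp_inj r0 f rY -> precomp_surj r1 r0 f rK.
Proof.
have [hg Mg rk_g rk] := ker_g; have g_full : row_full g by rewrite /row_full rk_g.
move=> surj_X inj_Y v hv.
have [u hu uf] := surj_X _ (hom_comp hv hg).
have Mu : M *m u = 0.
  by apply: inj_Y (hom_comp hu hM) _; rewrite -mulmxA uf mulmxA Mg mul0mx.
have [w uw] := mulmx_ker_factor Mg rk Mu.
exists w; first by apply: (hom_factor_mono hg g_full); rewrite -uw.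
by apply: (row_full_inj g_full); rewrite mulmxA -uw uf.
Qed.

Lemma kernel_precomp_inj : precomp_inj r0 f rX -> precomp_inj r0 f rK.
Proof.
have [hg _ rk_g _] := ker_g; have g_full : row_full g by rewrite /row_full rk_g.
move=> inj_X u hu uf; apply: (row_full_inj g_full); rewrite mulmx0.
by apply: inj_X (hom_comp hu hg) _; rewrite -mulmxA uf mulmx0.
Qed.

End Kernel.

Section Cokernel.
Variables (nX nY nC : nat) (rX : A -> 'M[k]_nX) (rY : A -> 'M[k]_nY) (rC : A -> 'M[k]_nC).
Variables (M : 'M[k]_(nY, nX)) (h : 'M[k]_(nC, nY)).
Hypotheses (rX_lmod : is_lmod rX) (rY_lmod : is_lmod rY) (rC_lmod : is_lmod rC).
Hypotheses (hM : is_hom rX rY M) (coker_h : is_cokernel rX rY rC M h).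

Lemma cokernel_precomp_surj : precomp_surj r1 r0 f rY -> precomp_surj r1 r0 f rC.
Proof.
have [hh _ rk_h _] := coker_h; have h_free : row_free h by rewrite /row_free rk_h.
move=> surj_Y v hv.
have [v' hv' hv'v] := dual_basis_lift_epi r1_lmod r1_dual rY_lmod rC_lmod hh h_free hv.
have [u hu uf] := surj_Y v' hv'.
by exists (h *m u); [exact: hom_comp hu hh | rewrite -mulmxA uf].
Qed.

Lemma cokernel_precomp_inj :
  precomp_surj r1 r0 f rX -> precomp_inj r0 f rY -> precomp_inj r0 f rC.
Proof.
have [hh hM0 rk_h rk] := coker_h; have h_free : row_free h by rewrite /row_free rk_h.
move=> surj_X inj_Y u hu uf.
have [u' hu' hu'u] := dual_basis_lift_epi r0_lmod r0_dual rY_lmod rC_lmod hh h_free hu.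
have [N u'fN] : exists N, u' *m f = M *m N.
  by apply: (mulmx_ker_factor hM0 rk); rewrite mulmxA hu'u uf.
have [w hw Mw] := dual_basis_lift r1_lmod r1_dual rX_lmod rY_lmod hM (hom_comp hf hu') u'fN.
have [t ht tf] := surj_X w hw.
have u'Mt : u' = M *m t.
  apply: subr0_eq; apply: inj_Y; first exact: hom_sub hu' (hom_comp ht hM).
  by rewrite mulmxBl -mulmxA tf Mw subrr.
by rewrite -hu'u u'Mt mulmxA hM0 mul0mx.
Qed.

End Cokernel.

Section Extension.
Variables (nX nY nZ : nat) (rX : A -> 'M[k]_nX) (rY : A -> 'M[k]_nY) (rZ : A -> 'M[k]_nZ).
Variables (g : 'M[k]_(nY, nX)) (h : 'M[k]_(nZ, nY)).
Hypotheses (rY_lmod : is_lmod rY) (rZ_lmod : is_lmod rZ) (ses : is_ses rX rY rZ g h).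

Lemma extension_precomp_surj :
  precomp_surj r1 r0 f rX -> precomp_surj r1 r0 f rZ -> precomp_surj r1 r0 f rY.
Proof.
have [[hg hh hg0 rk_g rk_h] _] := ses.
have g_full : row_full g by rewrite /row_full rk_g.
have h_free : row_free h by rewrite /row_free rk_h.
have rk : (\rank g + \rank h)%N = nY by rewrite rk_g rk_h; case: ses.
move=> surj_X surj_Z v hv.
have [uZ huZ uZf] := surj_Z _ (hom_comp hv hh).
have [uY huY huYZ] := dual_basis_lift_epi r0_lmod r0_dual rY_lmod rZ_lmod hh h_free huZ.
have [vX vX_eq] : exists vX, v - uY *m f = g *m vX.
  by apply: (mulmx_ker_factor hg0 rk); rewrite mulmxBr mulmxA huYZ uZf subrr.
have hvX : is_hom r1 rX vX.
  by apply: (hom_factor_mono hg g_full); rewrite -vX_eq; exact: hom_sub hv (hom_comp hf huY).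
have [uX huX uXf] := surj_X vX hvX.
exists (uY + g *m uX); first exact: hom_add huY (hom_comp huX hg).
by rewrite mulmxDl -mulmxA uXf -vX_eq addrC subrK.
Qed.

Lemma extension_precomp_inj :
  precomp_inj r0 f rX -> precomp_inj r0 f rZ -> precomp_inj r0 f rY.
Proof.
have [[hg hh hg0 rk_g rk_h] _] := ses.
have g_full : row_full g by rewrite /row_full rk_g.
have rk : (\rank g + \rank h)%N = nY by rewrite rk_g rk_h; case: ses.
move=> inj_X inj_Z u hu uf.
have hu0 : h *m u = 0.
  by apply: inj_Z (hom_comp hu hh) _; rewrite -mulmxA uf mulmx0.
have [w uw] := mulmx_ker_factor hg0 rk hu0.
have hw : is_hom r0 rX w by apply: (hom_factor_mono hg g_full); rewrite -uw.
have w0 : w = 0.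
  by apply: inj_X hw _; apply: (row_full_inj g_full); rewrite mulmxA -uw uf mulmx0.
by rewrite uw w0 mulmx0.
Qed.

End Extension.

Lemma precomp_bij_wide : is_wide (precomp_bij r1 r0 f).
Proof.
split.
- move=> nX nY rX rY M _ _ [surj_X inj_X] [_ inj_Y] hM nK rK g _ ker_g.
  split; first exact: kernel_precomp_surj ker_g surj_X inj_Y.
  exact: kernel_precomp_inj ker_g inj_X.
- move=> nX nY rX rY M rX_lmod rY_lmod [surj_X _] [surj_Y inj_Y] hM nC rC h rC_lmod coker_h.
  split; first exact: cokernel_precomp_surj coker_h surj_Y.
  exact: cokernel_precomp_inj coker_h surj_X inj_Y.
- move=> nX nY nZ rX rY rZ g h _ rY_lmod rZ_lmod [surj_X inj_X] [surj_Z inj_Z] ses.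
  split; first exact: extension_precomp_surj ses surj_X surj_Z.
  exact: extension_precomp_inj ses inj_X inj_Z.
Qed.

End Closure.

Lemma is_wide_equiv (k : fieldType) (A : falgType k) (W W' : modclass A) :
  (forall n (r : A -> 'M[k]_n), is_lmod r -> W n r <-> W' n r) -> is_wide W' -> is_wide W.
Proof.
move=> eqW [ker coker ext]; split.
- move=> nX nY rX rY M rX_lmod rY_lmod /(eqW _ _ rX_lmod) WX /(eqW _ _ rY_lmod) WY hM.
  move=> nK rK g rK_lmod ker_g.
  exact/(eqW _ _ rK_lmod)/(ker _ _ _ _ M rX_lmod rY_lmod WX WY hM _ _ g rK_lmod ker_g).
- move=> nX nY rX rY M rX_lmod rY_lmod /(eqW _ _ rX_lmod) WX /(eqW _ _ rY_lmod) WY hM.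
  move=> nC rC h rC_lmod coker_h.
  exact/(eqW _ _ rC_lmod)/(coker _ _ _ _ M rX_lmod rY_lmod WX WY hM _ _ h rC_lmod coker_h).
- move=> nX nY nZ rX rY rZ g h rX_lmod rY_lmod rZ_lmod.
  move=> /(eqW _ _ rX_lmod) WX /(eqW _ _ rZ_lmod) WZ ses.
  exact/(eqW _ _ rY_lmod)/(ext _ _ _ _ _ _ g h rX_lmod rY_lmod rZ_lmod WX WZ ses).
Qed.

Theorem proposition3p7 (k : closedFieldType) (A : falgType k) (n1 n0 : nat)
  (rP1 : A -> 'M[k]_n1) (rP0 : A -> 'M[k]_n0) (f : 'M[k]_(n0, n1)) :
  is_proj rP1 -> is_proj rP0 -> is_hom rP1 rP0 f ->
  is_wide (Wf rP1 rP0 f).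
Proof.
move=> P1 P0 hf; have [r1_lmod _] := P1; have [r0_lmod _] := P0.
have [r1_dual r0_dual] := (proj_dual_basis P1, proj_dual_basis P0).
apply: (is_wide_equiv (W' := precomp_bij rP1 rP0 f)).
  exact: Wf_precomp_bij.
exact: precomp_bij_wide.
Qed.
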